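(* Let $n\ge 1$ and let $\mathcal P(n,1,1)$ be the set of lattice paths with steps $(1,1)$ (up) and $(1,-1)$ (down) from $(0,0)$ to $(2n+1,1)$. (1) For each $k=1,2,\dots,n+1$, the number of paths in $\mathcal P(n,1,1)$ that start with an up step and have exactly $k$ up steps starting on or below the $x$-axis is $\frac{1}{n+1}\binom{2n}{n}$. (2) For each $k=1,2,\dots,n$, the number of paths in $\mathcal P(n,1,1)$ that start with a down step and have exactly $k$ down steps starting on or below the $x$-axis is $\frac{1}{n}\binom{2n}{n-1}$. (3) For each $k=1,2,\dots,2n+1$, the number of paths in $\mathcal P(n,1,1)$ with exactly $k$ vertices on or below the $x$-axis is $\frac{1}{2n+1}\binom{2n+1}{n}$.
   Context: A step starts on or below the $x$-axis if its initial vertex has $y$-coordinate $\le 0$. A vertex is on or below the $x$-axis if its $y$-coordinate is $\le 0$ (the final vertex, at height $1$, is never counted). *)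

From mathcomp Require Import all_boot all_order all_algebra.
Set Implicit Arguments. Unset Strict Implicit. Unset Printing Implicit Defensive.
Import Order.TTheory GRing.Theory Num.Theory.

Local Open Scope ring_scope.

(* A path is a boolean word: true = up step (1,1), false = down step (1,-1). *)
Definition step (b : bool) : int := if b then 1 else -1.

Definition height (s : seq bool) : int := \sum_(b <- s) step b.

(* The i-th vertex (i = 0..size p) has height  height (take i p);
   step i starts at vertex i. *)

Definition ups_low (p : seq bool) : nat :=
  count (fun i => nth false p i && (height (take i p) <= 0)) (iota 0 (size p)).

Definition downs_low (p : seq bool) : nat :=
  count (fun i => ~~ nth false p i && (height (take i p) <= 0)) (iota 0 (size p)).

(* number of vertices on or below the x-axis; vertices 0..size p - 1
   (the final vertex, at height 1 for paths in P(n,1,1), is never counted) *)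
Definition verts_low (p : seq bool) : nat :=
  count (fun i => height (take i p) <= 0) (iota 0 (size p)).

Definition P11 (n : nat) : {set (2 * n + 1)%N.-tuple bool} :=
  [set p : (2 * n + 1)%N.-tuple bool | height p == 1].

From mathcomp Require Import all_boot all_order all_algebra.
From mathcomp Require Import zify ring.
Set Implicit Arguments. Unset Strict Implicit. Unset Printing Implicit Defensive.
Import Order.TTheory GRing.Theory Num.Theory.
Local Open Scope ring_scope.

(* Order the vertices 0, ..., m-1 of a word s of length m
   ending at height 1 by height, ties broken in favour of later vertices.  The
   rotation of s starting at vertex j has a vertex on or below the axis
   exactly where s has a vertex not above j in this order: the wrapped-around
   part is shifted down by the final height 1, which is what the tie-break
   accounts for.  So, among the steps of a fixed kind, the number starting low
   in the rotation at such a step j is the rank of j, and as j ranges over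
   these steps the rank takes each value 1, ..., #steps exactly once.  Double
   counting pairs (rotation, path) shows that each admissible value is taken
   on exactly 1/(2n+1) of P(n,1,1). *)

Definition low_count (q : pred bool) (s : seq bool) : nat :=
  count (fun i => q (nth false s i) && (height (take i s) <= 0)) (iota 0 (size s)).

Lemma height_cat s1 s2 : height (s1 ++ s2) = height s1 + height s2.
Proof. by rewrite /height big_cat. Qed.

Lemma height_count s : height s = 2 * (count id s)%:Z - (size s)%:Z.
Proof.
elim: s => [|b s IH]; first by rewrite /height big_nil.
by rewrite /height big_cons -/(height s) IH; case: b => /=; rewrite /step; lia.
Qed.

Lemma height_rotr j s : height (rotr j s) = height s.
Proof. by rewrite /height (perm_big s) // perm_rotr. Qed.

Lemma height_take_rot_lo j i s : (j <= size s)%N -> (i <= size s - j)%N ->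
  height (take i (rot j s)) = height (take (j + i) s) - height (take j s).
Proof.
move=> hj hi; rewrite /rot takel_cat ?size_drop // take_drop [(j + i)%N]addnC.
rewrite -{2}(cat_take_drop j (take (i + j) s)) height_cat take_takel ?leq_addl //.
by ring.
Qed.

Lemma height_take_rot_hi j i s : (j <= size s)%N -> (size s - j <= i <= size s)%N ->
  height (take i (rot j s)) =
  height s - height (take j s) + height (take (i - (size s - j)) s).
Proof.
move=> hj /andP[h1 h2]; rewrite /rot take_cat size_drop ltnNge h1 /=.
rewrite height_cat take_takel; last by lia.
by rewrite -[in height s](cat_take_drop j s) height_cat; ring.
Qed.

Lemma nth_rot0 j (s : seq bool) : (j < size s)%N -> nth false (rot j s) 0 = nth false s j.
Proof. by move=> hj; rewrite /rot nth_cat size_drop subn_gt0 hj nth_drop addn0. Qed.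

Section TieBreak.

Variables (m : nat) (a b : int).

Lemma ler_tiebreak_le (t j : nat) : (j <= t < m)%N ->
  (a - b <= 0) = (m%:Z * a - t%:Z <= m%:Z * b - j%:Z).
Proof.
move=> /andP[h1 h2]; apply/idP/idP => H.
  have : m%:Z * (a - b) <= 0 by nia.
  by nia.
case: (lerP (a - b) 0) => // H2; exfalso.
have : m%:Z * (a - b - 1) >= 0 by nia.
by nia.
Qed.

Lemma ler_tiebreak_gt (t j : nat) : (t < j < m)%N ->
  (1 - b + a <= 0) = (m%:Z * a - t%:Z <= m%:Z * b - j%:Z).
Proof.
move=> /andP[h1 h2]; apply/idP/idP => H.
  have : m%:Z * (a - b + 1) <= 0 by nia.
  by nia.
case: (lerP (1 - b + a) 0) => // H2; exfalso.
have : m%:Z * (a - b) >= 0 by nia.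
by nia.
Qed.

Lemma tiebreak_inj (t t' : nat) : (t < m)%N -> (t' < m)%N ->
  m%:Z * a - t%:Z = m%:Z * b - t'%:Z -> t = t'.
Proof.
move=> h1 h2 H; case: (ltrgtP a b) => H2.
- have : m%:Z * (b - a - 1) >= 0 by nia.
  by nia.
- have : m%:Z * (a - b - 1) >= 0 by nia.
  by nia.
- by subst; lia.
Qed.

End TieBreak.

Section CycleLemma.

Variables (q : pred bool) (s : seq bool).

Definition vertex_key t : int := (size s)%:Z * height (take t s) - t%:Z.

Definition below_key j t := q (nth false s t) && (vertex_key t <= vertex_key j).

Definition key_rank j := count (below_key j) (iota 0 (size s)).

Lemma vertex_key_inj j j' : (j < size s)%N -> (j' < size s)%N ->
  vertex_key j = vertex_key j' -> j = j'.
Proof. exact: tiebreak_inj. Qed.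

Lemma key_rank_lt j j' : vertex_key j < vertex_key j' -> (j' < size s)%N ->
  q (nth false s j') -> (key_rank j < key_rank j')%N.
Proof.
move=> lt_jj' hj' qj'.
have := count_predUI (below_key j) (pred1 j') (iota 0 (size s)).
rewrite (count_uniq_mem _ (iota_uniq _ _)) mem_iota hj'.
rewrite (@eq_count _ (predI _ _) pred0); last first.
  move=> t /=; rewrite /below_key; case: eqP => [->|]; last by rewrite andbF.
  by rewrite andbT leNgt lt_jj' andbF.
rewrite count_pred0 addn0 addn1 => <-; apply: sub_count => t /=.
rewrite /below_key; case/orP => [/andP[-> le_tj]|/eqP ->]; last by rewrite qj' lexx.
exact: le_trans le_tj (ltW lt_jj').
Qed.

Lemma key_rank_inj j j' : (j < size s)%N -> (j' < size s)%N ->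
  q (nth false s j) -> q (nth false s j') -> key_rank j = key_rank j' -> j = j'.
Proof.
move=> hj hj' qj qj' e.
case: (ltrgtP (vertex_key j) (vertex_key j')) => H.
- by have := key_rank_lt H hj' qj'; rewrite e ltnn.
- by have := key_rank_lt H hj qj; rewrite e ltnn.
- exact: vertex_key_inj H.
Qed.

Lemma key_rank_bounds j : (j < size s)%N -> q (nth false s j) ->
  (0 < key_rank j <= count q s)%N.
Proof.
move=> hj qj; apply/andP; split.
  rewrite -has_count; apply/hasP; exists j; first by rewrite mem_iota.
  by rewrite /below_key qj lexx.
rewrite -[X in count q X](mkseq_nth false s) count_map; apply: sub_count => t.
by case/andP.
Qed.

Hypothesis height_s : height s = 1.

Lemma low_count_rot j : (j < size s)%N -> low_count q (rot j s) = key_rank j.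
Proof.
move=> hj; rewrite /low_count size_rot.
have -> : iota 0 (size s) = iota 0 (size s - j) ++ iota (size s - j) j.
  by rewrite -iotaD subnK // ltnW.
rewrite /key_rank (_ : iota 0 (size s) = iota 0 j ++ iota j (size s - j)); last first.
  by rewrite -iotaD subnKC // ltnW.
rewrite !count_cat addnC; congr (_ + _)%N.
- rewrite -[in LHS](addn0 (size s - j)%N) iotaDl count_map; apply: eq_in_count => t.
  rewrite mem_iota /= add0n => ht.
  have ht' : (size s - j <= size s - j + t <= size s)%N by rewrite leq_addr /=; lia.
  rewrite height_take_rot_hi ?(ltnW hj) // addKn height_s.
  rewrite /rot nth_cat size_drop ltnNge leq_addr /= addKn nth_take //.
  by congr (_ && _); apply: ler_tiebreak_gt; lia.
- rewrite -[X in _ = count _ (iota X _)](addn0 j) iotaDl count_map; apply: eq_in_count => i.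
  rewrite mem_iota /= add0n => hi.
  rewrite height_take_rot_lo ?(ltnW hj) ?(ltnW hi) //.
  rewrite /rot nth_cat size_drop hi nth_drop /below_key /vertex_key.
  by congr (_ && _); apply: ler_tiebreak_le; lia.
Qed.

Lemma cycle_lemma k : (0 < k <= count q s)%N ->
  count (fun j => q (nth false s j) && (low_count q (rot j s) == k))
        (iota 0 (size s)) = 1%N.
Proof.
move=> hk.
set L := [seq j <- iota 0 (size s) | q (nth false s j)].
have memL j : (j \in L) = (j < size s)%N && q (nth false s j).
  by rewrite mem_filter mem_iota andbC.
have size_L : size L = count q s.
  by rewrite size_filter -[X in count q X](mkseq_nth false s) count_map.
have uniq_ranks : uniq (map key_rank L).
  rewrite map_inj_in_uniq ?filter_uniq ?iota_uniq // => j j'.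
  by rewrite !memL => /andP[? ?] /andP[? ?]; apply: key_rank_inj.
have ranks_sub : {subset map key_rank L <= iota 1 (size L)}.
  move=> x /mapP[j]; rewrite memL => /andP[hj qj] ->.
  by rewrite mem_iota add1n ltnS size_L; apply: key_rank_bounds.
have [_ ranks_eq] := uniq_min_size uniq_ranks ranks_sub
  (eq_leq (etrans (size_iota _ _) (esym (size_map _ _)))).
have /mapP[j0] : k \in map key_rank L by rewrite ranks_eq mem_iota add1n ltnS size_L.
rewrite memL => /andP[hj0 qj0] rank_j0.
rewrite (@eq_in_count _ _ (pred1 j0)); last first.
  move=> j; rewrite mem_iota add0n /= => hj.
  rewrite low_count_rot // rank_j0.
  apply/idP/idP => [/andP[qj /eqP e]|/eqP ->]; last by rewrite qj0 eqxx.
  by apply/eqP; apply: key_rank_inj e.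
by rewrite (count_uniq_mem _ (iota_uniq 0 (size s))) mem_iota add0n hj0.
Qed.

End CycleLemma.

Lemma card_tuple_count_true m k : #|[set t : m.-tuple bool | count id t == k]| = 'C(m, k).
Proof.
rewrite -[in RHS](card_ord m) -card_draws.
pose g (A : {set 'I_m}) : m.-tuple bool := [tuple i \in A | i < m].
have tnth_g A i : tnth (g A) i = (i \in A) by rewrite tnth_mktuple.
have g_inj : injective g by move=> A B e; apply/setP => i; rewrite -!tnth_g e.
have count_g A : count id (g A) = #|A|.
  rewrite /= count_map cardE /enum_mem size_filter.
  by rewrite (@eq_filter _ _ predT) ?filter_predT //; apply: eq_count.
rewrite -(card_imset _ g_inj); apply: eq_card => t; rewrite inE.
apply/idP/imsetP => [/eqP <-|[A]]; last by rewrite inE => /eqP <- ->; rewrite count_g.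
have gt : g [set i | tnth t i] = t by apply: eq_from_tnth => i; rewrite tnth_g inE.
by exists [set i | tnth t i]; rewrite // inE -count_g gt.
Qed.

Lemma mem_P11 n (p : (2 * n + 1).-tuple bool) : (p \in P11 n) = (count id p == n.+1).
Proof. by rewrite inE height_count size_tuple; apply/eqP/eqP; lia. Qed.

Lemma card_P11 n : #|P11 n| = 'C(2 * n + 1, n).
Proof.
rewrite (@eq_card _ _ [set t : (2 * n + 1).-tuple bool | count id t == n.+1]);
  last by move=> p; rewrite mem_P11 inE.
by rewrite card_tuple_count_true -bin_sub; [congr 'C(_, _)|]; lia.
Qed.

Lemma sum_nat_mem_card (T : finType) (A : {set T}) : (\sum_(x : T) (x \in A : nat))%N = #|A|.
Proof. by rewrite -sum1_card [in RHS]big_mkcond; apply: eq_bigr => x _; case: (x \in A). Qed.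

Lemma card_P11_low_count n (q : pred bool) k :
  (forall p : (2 * n + 1).-tuple bool, p \in P11 n -> (0 < k <= count q p)%N) ->
  (#|[set p in P11 n | q (nth false p 0) && (low_count q p == k)]| * (2 * n + 1)
    = 'C(2 * n + 1, n))%N.
Proof.
move=> hk; set m := (2 * n + 1)%N; set S := [set p in P11 n | _].
pose B (j : 'I_m) (p : m.-tuple bool) : bool :=
  (p \in P11 n) && q (nth false p j) && (low_count q (rot j p) == k).
have by_rotation j : (\sum_(p : m.-tuple bool) (B j p : nat))%N = #|S|.
  have rotr_inj : injective (fun p : m.-tuple bool => [tuple of rotr j p]).
    by move=> x y /(congr1 val) /(congr1 (rot j)); rewrite /= !rotrK => /val_inj.
  rewrite (reindex_inj rotr_inj) -sum_nat_mem_card; apply: eq_bigr => p _.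
  rewrite /B /= rotrK !inE height_rotr -andbA.
  by rewrite -(@nth_rot0 j (rotr j p)) ?rotrK ?size_rotr ?size_tuple.
have by_path p : (\sum_(j : 'I_m) (B j p : nat))%N = (p \in P11 n).
  rewrite /B; case hp: (p \in P11 n) => /=; last by rewrite big1.
  rewrite -(big_mkord xpredT (fun j => q (nth false p j) && (low_count q (rot j p) == k) : nat)).
  move: hp; rewrite inE => /eqP height_p.
  rewrite -(cycle_lemma height_p (hk p _)); last by rewrite inE height_p.
  rewrite size_tuple -sum1_count [in RHS]big_mkcond /index_iota subn0.
  by apply: eq_bigr => i _; case: ifP.
have : (\sum_(j : 'I_m) \sum_(p : m.-tuple bool) (B j p : nat) =
         \sum_(p : m.-tuple bool) \sum_(j : 'I_m) (B j p : nat))%N by apply: exchange_big.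
rewrite (eq_bigr _ (fun j _ => by_rotation j)) (eq_bigr _ (fun p _ => by_path p)).
by rewrite sum_nat_mem_card sum_nat_const card_ord card_P11 mulnC.
Qed.

Lemma natr_eq_div (c d e : nat) : (0 < d)%N -> (c * d = e)%N -> (c%:R : rat) = e%:R / d%:R.
Proof. by move=> hd <-; rewrite natrM mulfK // pnatr_eq0 -lt0n. Qed.

Lemma bin_odd_central n :
  ('C(2 * n + 1, n)%:R / (2 * n + 1)%:R : rat) = 'C(2 * n, n)%:R / (n + 1)%:R.
Proof.
apply/eqP; rewrite eqr_div ?pnatr_eq0 ?addn1 // -!natrM -addn1; apply/eqP; congr _%:R.
have := mul_bin_down (2 * n + 1) n.
by rewrite addn1 /= -addn1 (_ : 2 * n + 1 - n = n + 1)%N; lia.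
Qed.

Lemma bin_odd_central_pred n : (0 < n)%N ->
  ('C(2 * n + 1, n)%:R / (2 * n + 1)%:R : rat) = 'C(2 * n, n.-1)%:R / n%:R.
Proof.
move=> n_gt0; apply/eqP; rewrite eqr_div ?pnatr_eq0 ?addn1 -?lt0n // -!natrM -addn1.
apply/eqP; congr _%:R.
have := mul_bin_diag (2 * n + 1) n.-1.
by rewrite addn1 /= -addn1 prednK //; lia.
Qed.
Theorem theorem5 (n : nat) : (1 <= n)%N ->
  (forall k : nat, (1 <= k <= n + 1)%N ->
     (#|[set p in P11 n | (head false p) && (ups_low p == k)]|%:R : rat)
       = 'C(2 * n, n)%:R / (n + 1)%:R) /\
  (forall k : nat, (1 <= k <= n)%N ->
     (#|[set p in P11 n | (~~ head true p) && (downs_low p == k)]|%:R : rat)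
       = 'C(2 * n, n.-1)%:R / n%:R) /\
  (forall k : nat, (1 <= k <= 2 * n + 1)%N ->
     (#|[set p in P11 n | verts_low p == k]|%:R : rat)
       = 'C(2 * n + 1, n)%:R / (2 * n + 1)%:R).
Proof.
move=> n_gt0; have m_gt0 : (0 < 2 * n + 1)%N by rewrite addn1.
split; [|split] => k hk.
- rewrite -bin_odd_central; apply: natr_eq_div => //.
  apply: (card_P11_low_count (q := id)) => p; rewrite mem_P11 => /eqP ->; lia.
- rewrite -bin_odd_central_pred //; apply: natr_eq_div => //.
  rewrite -(card_P11_low_count (q := negb) (k := k)); last first.
    move=> p; rewrite mem_P11 => /eqP count_up.
    have := count_predC id p; rewrite count_up size_tuple (@eq_count _ _ negb) //.
    by lia.
  congr (_ * _)%N; apply: eq_card => p; rewrite !inE.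
  by case: p => -[|b s] //=; rewrite addn1.
- apply: natr_eq_div => //.
  rewrite -(card_P11_low_count (q := predT) (k := k)); last first.
    by move=> p _; rewrite count_predT size_tuple; lia.
  by congr (_ * _)%N; apply: eq_card => p; rewrite !inE.
Qed.
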